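(* Fix a positive integer $s$ and let $h_{i,j}=h_{s,i,j}$ and $H_i(x)=\sum_{j\ge i+1}h_{s,i,j}x^j$ be as in the context. Then for $i>1$, $$H_i=-\Big(\frac{sx}{i}-1\Big)H_{i-1}+\frac{x(x-1)}{i}H_{i-1}',$$ where $H'$ denotes the derivative with respect to $x$ (as formal power series).
   Context: For a fixed positive integer $s$, the numbers $h_{s,i,j}$ (integers $i\ge 0$, $j$) are defined recursively by: $h_{s,i,j}=0$ if $j\le i$; for $i=0$ and $j\ge 1$, $h_{s,0,j}=\binom{s+j-1}{j}\frac{s-j}{s}$; for $i>0$ and $j>i$, $h_{s,i,j}=-\frac{s-j+1}{i}h_{s,i-1,j-1}-\frac{j-i}{i}h_{s,i-1,j}$. $H_i(x)=\sum_{j\ge i+1}h_{s,i,j}x^j$ is the ordinary generating function, a formal power series in $x$. *)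

From HB Require Import structures.
From mathcomp Require Import all_boot all_order all_algebra.
Set Implicit Arguments. Unset Strict Implicit. Unset Printing Implicit Defensive.
Import Order.TTheory GRing.Theory Num.Theory.
Local Open Scope ring_scope.

(* The numbers h_{s,i,j} (rational valued), for i j : nat.
   Negative j are irrelevant since h_{s,i,j} = 0 whenever j <= i, i >= 0. *)
Fixpoint h (s i j : nat) : rat :=
  match i with
  | 0%N => if (1 <= j)%N
           then ('C(s + j - 1, j))%:R * ((s%:R - j%:R) / s%:R)
           else 0
  | i'.+1 => if (j <= i)%N then 0
             else - ((s%:R - j%:R + 1) / i%:R) * h s i' j.-1
                  - ((j%:R - i%:R) / i%:R) * h s i' j
  end.

Definition fps := nat -> rat.

Definition fps_mul (f g : fps) : fps :=
  fun n => \sum_(k < n.+1) f k * g (n - k)%N.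

Definition fps_add (f g : fps) : fps := fun n => f n + g n.

Definition fps_deriv (f : fps) : fps := fun n => (n.+1)%:R * f n.+1.

Definition fps_of_poly (p : {poly rat}) : fps := fun n => p`_n.

Definition H (s i : nat) : fps := fun j => if (i < j)%N then h s i j else 0.

From HB Require Import structures.
From mathcomp Require Import all_boot all_order all_algebra.
From mathcomp Require Import ring.
From Stdlib Require Import FunctionalExtensionality.
Set Implicit Arguments. Unset Strict Implicit. Unset Printing Implicit Defensive.
Import Order.TTheory GRing.Theory Num.Theory.
Local Open Scope ring_scope.

(* Compare coefficients of x^n.  For any series f with f_0 = f_1 = 0, the
   x^n-coefficient of (1 - c x) f + d x (x - 1) f' is
   (1 - d n) f_n + (d (n - 1) - c) f_(n-1).  With c = s/i and d = 1/i this is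
   exactly the recurrence defining h_(s,i,n) from h_(s,i-1,n-1) and
   h_(s,i-1,n); the truncation H_i(n) = 0 for n <= i is compatible with the
   recurrence because H_(i-1) vanishes in degrees <= i - 1 and the coefficient
   of H_(i-1)(n) vanishes at n = i. *)

Lemma fps_mul_polyE (p : {poly rat}) (m : nat) (f : fps) :
  (size p <= m)%N -> f 0%N = 0 -> forall n,
  fps_mul (fps_of_poly p) f n = \sum_(k < m) p`_k * f (n - k)%N.
Proof.
(* The terms with k > n on the right are p_k * f 0, since n - k truncates to 0. *)
move=> /leq_sizeP p_hi f0 n; rewrite /fps_mul /fps_of_poly.
pose F k := p`_k * f (n - k)%N.
rewrite (big_ord_widen _ F (leq_maxr m n.+1)).
rewrite [RHS](big_ord_widen _ F (leq_maxl m n.+1)) big_mkcond [RHS]big_mkcond /=.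
apply: eq_bigr => k _; rewrite /F; case: ltnP => [_|n_lt_k]; case: ltnP => // m_k.
- by rewrite p_hi // mul0r.
- by rewrite (eqnP (ltnW n_lt_k)) f0 mulr0.
Qed.

Lemma size_one_sub_scaleX (c : rat) : (size (- (c *: 'X - 1) : {poly rat}) <= 2)%N.
Proof. by apply/leq_sizeP => -[|[|k]] //= _; rewrite !coefE /= mulr0 subrr oppr0. Qed.

Lemma size_scale_X_mul_Xsub1 (d : rat) : (size (d *: ('X * ('X - 1)) : {poly rat}) <= 3)%N.
Proof. by apply/leq_sizeP => -[|[|[|k]]] //= _; rewrite !coefE /= subrr mulr0. Qed.

Lemma coef_lin_deriv_op (c d : rat) (f : fps) (n : nat) : f 0%N = 0 -> f 1%N = 0 ->
  fps_add (fps_mul (fps_of_poly (- (c *: 'X - 1))) f)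
          (fps_mul (fps_of_poly (d *: ('X * ('X - 1)))) (fps_deriv f)) n
  = (1 - d * n%:R) * f n + (d * (n%:R - 1) - c) * f n.-1.
Proof.
(* At n = 0 the term f n.-1 = f 0 = 0 plays the role of f_(-1). *)
move=> f0 f1; have df0 : fps_deriv f 0%N = 0 by rewrite /fps_deriv f1 mulr0.
rewrite /fps_add (fps_mul_polyE (size_one_sub_scaleX c) f0).
rewrite (fps_mul_polyE (size_scale_X_mul_Xsub1 d) df0).
rewrite !big_ord_recr !big_ord0 /= !coefE /=.
by case: n => [|[|n]]; rewrite /fps_deriv ?(subn0, subSS, sub0n) ?f0 ?f1; ring.
Qed.

Lemma H_eq0 (s i n : nat) : (n <= i)%N -> H s i n = 0.
Proof. by rewrite /H leqNgt => /negbTE ->. Qed.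

Lemma H_succ (s i n : nat) :
  H s i.+1 n = - ((s%:R - n%:R + 1) / i.+1%:R) * H s i n.-1
               - ((n%:R - i.+1%:R) / i.+1%:R) * H s i n.
Proof.
rewrite {1}/H; case: ltnP => [lt_in | le_ni].
  by rewrite /= leqNgt lt_in /H ltn_predRL lt_in (ltnW lt_in).
have le_pred : (n.-1 <= i)%N by case: n le_ni.
rewrite (H_eq0 _ le_pred); move: le_ni; rewrite leq_eqVlt => /predU1P [-> | lt_ni].
  by rewrite !(mulr0, subrr, mul0r).
by rewrite H_eq0 // !(mulr0, subrr).
Qed.

Theorem lemma2 (s i : nat) (hs : (0 < s)%N) (hi : (1 < i)%N) :
  H s i =
  fps_add
    (fps_mul (fps_of_poly (- ((s%:R / i%:R) *: 'X - 1))) (H s i.-1))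
    (fps_mul (fps_of_poly ((i%:R)^-1 *: ('X * ('X - 1))))
             (fps_deriv (H s i.-1))).
Proof.
case: i hi => [|[|i]] //= _; apply: functional_extensionality => n.
have H0 : H s i.+1 0 = 0 by exact: H_eq0.
have H1 : H s i.+1 1 = 0 by exact: H_eq0.
rewrite [LHS]H_succ coef_lin_deriv_op //.
by field; rewrite -natrD pnatr_eq0.
Qed.
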